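(* In the setting described in the context, for every $\gamma \in (0,\frac12)$ and every $\lambda_0 > 1$ we have, at every point of $\mathbb{R}^n$, \[\max\{u_0,\dots,u_q\} \leq \hat u_q \leq \max\{u_0,\dots,u_q\} + \sum_{k=1}^q \lambda_k^{-1}.\] In particular, $\bigcap_{m=0}^q \{u_m \leq -\lambda_0^{-1}\} \subset \hat\Omega \subset \Omega$.
   Context: $n\ge 3$, $u_0,\dots,u_q$ are non-constant linear (affine) functions on $\mathbb{R}^n$, and $\Omega=\bigcap_{m=0}^q\{u_m\le 0\}$ is a compact convex polytope with non-empty interior. Fix a smooth even function $\eta:\mathbb{R}\to\mathbb{R}$ with $\eta(t)=|t|$ for $|t|\ge \frac12$ and $\eta''\ge 0$ everywhere. For $\gamma\in(0,\frac12)$ and $\lambda_0>1$ set $\lambda_k=\gamma^{-k}\lambda_0$ for $1\le k\le q$. Define $\hat u_0=u_0$ and, for $1\le k\le q$, $\hat u_k=\frac12\big(\hat u_{k-1}+u_k+\lambda_k^{-1}\eta(\lambda_k(\hat u_{k-1}-u_k))\big)$. Set $\hat\Omega=\{\hat u_q\le 0\}$. *)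

From HB Require Import structures.
From mathcomp Require Import all_boot all_order all_algebra.
From mathcomp Require Import all_classical all_reals all_analysis.
Set Implicit Arguments. Unset Strict Implicit. Unset Printing Implicit Defensive.
Import Order.TTheory GRing.Theory Num.Theory.
Import numFieldNormedType.Exports.
Local Open Scope ring_scope.
Local Open Scope classical_set_scope.

(* u : R^n -> R is affine (linear in the paper's terminology) and non-constant *)
Definition nonconst_affine (R : realType) (n : nat) (u : 'rV[R]_n -> R) : Prop :=
  exists (a : 'rV[R]_n) (b : R), a != 0 /\ forall x, u x = \sum_(i < n) a 0 i * x 0 i + b.

Definition smooth_fun (R : realType) (eta : R -> R) : Prop :=
  forall (k : nat) (t : R), derivable (derive1n k eta) t 1.

Definition lam (R : realType) (gamma lambda0 : R) (k : nat) : R :=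
  gamma ^- k * lambda0.

Fixpoint hatu (R : realType) (n : nat) (eta : R -> R) (gamma lambda0 : R)
  (u : nat -> 'rV[R]_n -> R) (k : nat) (x : 'rV[R]_n) : R :=
  match k with
  | 0 => u 0%N x
  | k'.+1 =>
      let h := hatu eta gamma lambda0 u k' x in
      let l := lam gamma lambda0 k in
      (h + u k x + l^-1 * eta (l * (h - u k x))) / 2
  end.

Definition Omega (R : realType) (n q : nat) (u : nat -> 'rV[R]_n -> R) : set 'rV[R]_n :=
  [set x | forall m, (m <= q)%N -> u m x <= 0].

(* Each step of the recursion replaces max(a, b) by the smoothed maximum
   (a + b + l^-1 eta (l (a - b))) / 2.  Convexity makes eta' nondecreasing, and
   eta' = -1, 1 beyond -1/2, 1/2, so eta is 1-Lipschitz and |t| <= eta t <= |t| + 1.  Hence the k-th step never falls below the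
   maximum and overshoots it by at most lambda_k^-1 / 2; summing gives the
   two-sided bound, and sum_k lambda_k^-1 = lambda_0^-1 sum_k gamma^k <= lambda_0^-1
   gives the inclusions. *)

From HB Require Import structures.
From mathcomp Require Import all_boot all_order all_algebra.
From mathcomp Require Import all_classical all_reals all_analysis.
From mathcomp Require Import ring lra.
Import Order.TTheory GRing.Theory Num.Theory.
Import numFieldNormedType.Exports.
Local Open Scope ring_scope.
Local Open Scope classical_set_scope.

Section smoothed_abs.
Context {R : realType} {eta : R -> R}.
Hypothesis eta_smooth : smooth_fun eta.
Hypothesis eta_abs : forall t, 1 / 2 <= `|t| -> eta t = `|t|.
Hypothesis eta_convex : forall t, 0 <= derive1n 2 eta t.

Lemma derive1_eta_nondecreasing : {homo eta^`() : s t / s <= t}.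
Proof.
move=> s t st; have d2 z : derivable eta^`() z 1 := eta_smooth 1%N z.
apply: (@ger0_derive1_le_cc R eta^`() s t (fun z _ => d2 z)
  (fun z _ => eta_convex z)); rewrite ?in_itv /= ?lexx ?st //.
by apply: derivable_within_continuous => z _; exact: d2.
Qed.

Lemma derive1_eta_gt_half t : 1 / 2 < t -> eta^`() t = 1.
Proof.
move=> t_gt; have eta_id : \forall s \near t, eta s = id s.
  near=> s; have s_gt : 1 / 2 < s by near: s; exact: lt_nbhsr.
  rewrite eta_abs /= gtr0_norm //; lra.
by rewrite derive1E (near_eq_derive _ eta_id) derive_id.
Unshelve. all: by end_near. Qed.

Lemma derive1_eta_lt_Nhalf t : t < - (1 / 2) -> eta^`() t = -1.
Proof.
move=> t_lt; have eta_opp : \forall s \near t, eta s = (- id) s.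
  near=> s; have s_lt : s < - (1 / 2) by near: s; exact: lt_nbhsl.
  rewrite eta_abs /= ltr0_norm //; lra.
by rewrite derive1E (near_eq_derive _ eta_opp) deriveN ?derive_id.
Unshelve. all: by end_near. Qed.

Lemma derive1_eta_abs_le1 t : `|eta^`() t| <= 1.
Proof.
rewrite ler_norml; apply/andP; split.
- have [t_lt|t_ge] := ltP t (-1); first by rewrite derive1_eta_lt_Nhalf //; lra.
  have : -1 < - (1 / 2) :> R by lra.
  by move/derive1_eta_lt_Nhalf <-; exact: derive1_eta_nondecreasing.
- have [t_gt|t_le] := ltP 1 t; first by rewrite derive1_eta_gt_half //; lra.
  have : 1 / 2 < 1 :> R by lra.
  by move/derive1_eta_gt_half <-; exact: derive1_eta_nondecreasing.
Qed.

Lemma eta_lipschitz s t : `|eta t - eta s| <= `|t - s|.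
Proof.
wlog st : s t / s <= t.
  move=> wlog_st; have [/wlog_st //|/ltW/wlog_st] := leP s t.
  by rewrite distrC [`|t - s|]distrC.
have d z : derivable eta z 1 := eta_smooth 0%N z.
have [c _ ->] := MVT_segment (df := eta^`()) st
  (fun z _ => ltac:(rewrite derive1E; exact: derivableP (d z)))
  (derivable_within_continuous (fun z _ => d z)).
by rewrite normrM ler_piMl // derive1_eta_abs_le1.
Qed.

Lemma eta_abs_bounds t : `|t| <= eta t <= `|t| + 1.
Proof.
have [t_ge|] := leP (1 / 2) `|t|; first by rewrite eta_abs // lexx /=; lra.
rewrite ltr_norml => /andP[t_gt t_lt].
have eta_half : eta (1 / 2) = 1 / 2 by rewrite eta_abs ger0_norm //; lra.
have eta_Nhalf : eta (- (1 / 2)) = 1 / 2 by rewrite eta_abs normrN ger0_norm //; lra.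
have dist_half : `|t - 1 / 2| = 1 / 2 - t by rewrite ltr0_norm ?opprB //; lra.
have dist_Nhalf : `|t - - (1 / 2)| = t + 1 / 2 by rewrite gtr0_norm ?opprK //; lra.
have := eta_lipschitz (1 / 2) t; have := eta_lipschitz (- (1 / 2)) t.
rewrite eta_half eta_Nhalf dist_half dist_Nhalf !ler_distl.
have [t_ge0|t_lt0] := leP 0 t; first by rewrite ger0_norm //; lra.
by rewrite ltr0_norm //; lra.
Qed.

End smoothed_abs.

Definition smooth_max {R : realFieldType} (eta : R -> R) (l a b : R) : R :=
  (a + b + l^-1 * eta (l * (a - b))) / 2.

Lemma smooth_max_bounds {R : realFieldType} {eta : R -> R} {c l : R} (a b : R) :
    (forall t, `|t| <= eta t <= `|t| + c) -> 0 < l ->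
  Num.max a b <= smooth_max eta l a b <= Num.max a b + c / (2 * l).
Proof.
move=> eta_bnd l_gt0; have /andP[eta_ge eta_le] := eta_bnd (l * (a - b)).
rewrite normrM gtr0_norm // in eta_ge eta_le.
have dist_le : `|a - b| <= l^-1 * eta (l * (a - b)) by rewrite ler_pdivlMl.
have le_dist : l^-1 * eta (l * (a - b)) <= `|a - b| + c / l.
  by rewrite ler_pdivrMl // [l * (`|_| + _)]mulrDr mulrCA divff ?gt_eqF // mulr1.
have -> : c / (2 * l) = c / l / 2 by field; rewrite gt_eqF.
rewrite /smooth_max.
have [ab|ab] := leP a b.
  by rewrite ler0_norm ?subr_le0 // opprB in dist_le le_dist *; apply/andP; split; lra.
by rewrite gtr0_norm ?subr_gt0 // in dist_le le_dist *; apply/andP; split; lra.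
Qed.

Lemma hatuS (R : realType) (n : nat) (eta : R -> R) (gamma lambda0 : R)
    (u : nat -> 'rV[R]_n -> R) k x :
  hatu eta gamma lambda0 u k.+1 x =
  smooth_max eta (lam gamma lambda0 k.+1) (hatu eta gamma lambda0 u k x) (u k.+1 x).
Proof. by []. Qed.

Lemma lam_gt0 (R : realType) (gamma lambda0 : R) k :
  0 < gamma -> 0 < lambda0 -> 0 < lam gamma lambda0 k.
Proof. by move=> g_gt0 l_gt0; rewrite mulr_gt0 // invr_gt0 exprn_gt0. Qed.

Lemma bigmax_ord_recr {d} {T : orderType d} (x : T) (F : nat -> T) k :
  \big[Order.max/x]_(i < k.+1) F i = Order.max (\big[Order.max/x]_(i < k) F i) (F k).
Proof.
elim: k F => [|k IH] F; first by rewrite big_ord_recl !big_ord0 maxC.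
by rewrite big_ord_recl (IH (fun i => F i.+1)) big_ord_recl maxA.
Qed.

Lemma hatu_bounds {R : realType} {n : nat} {eta : R -> R} {gamma lambda0 c : R}
    (u : nat -> 'rV[R]_n -> R) (x : 'rV[R]_n) k :
    (forall t, `|t| <= eta t <= `|t| + c) -> c <= 2 -> 0 < gamma -> 0 < lambda0 ->
  \big[Num.max/u 0%N x]_(m < k.+1) u m x <= hatu eta gamma lambda0 u k x <=
  \big[Num.max/u 0%N x]_(m < k.+1) u m x + \sum_(1 <= j < k.+1) (lam gamma lambda0 j)^-1.
Proof.
move=> eta_bnd c_le2 g_gt0 l0_gt0.
elim: k => [|k IH]; rewrite (bigmax_ord_recr _ (fun m => u m x)).
  by rewrite big_ord0 maxxx big_geq // addr0 lexx.
rewrite hatuS big_nat_recr //=.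
set M := \big[Num.max/_]_(i < k.+1) _ in IH *; set S := \sum_(1 <= j < k.+1) _ in IH *.
set h := hatu _ _ _ _ k x in IH *; set v := u k.+1 x; set l := lam gamma lambda0 k.+1.
have l_gt0 : 0 < l by exact: lam_gt0.
have S_ge0 : 0 <= S by apply: sumr_ge0 => j _; rewrite invr_ge0 ltW // lam_gt0.
have step_le : c / (2 * l) <= l^-1.
  by rewrite invfM mulrA -[leRHS]mul1r ler_pM2r ?invr_gt0 //; lra.
have /andP[M_le_h h_le] := IH.
have /andP[sm_ge sm_le] := smooth_max_bounds h v eta_bnd l_gt0.
have maxMv_le : Num.max M v <= Num.max h v := le_max2 M_le_h (lexx v).
have maxhv_le : Num.max h v <= Num.max M v + S.
  rewrite ge_max; apply/andP; split.
    by apply: le_trans h_le _; rewrite lerD2r le_max lexx.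
  by apply: le_trans (_ : Num.max M v <= _); rewrite ?lerDl // le_max lexx orbT.
apply/andP; split; first exact: le_trans maxMv_le sm_ge.
by rewrite addrA; apply: le_trans sm_le _; apply: lerD.
Qed.

Lemma sum_expr_le {R : realFieldType} {g : R} q :
  0 <= g <= 1 / 2 -> \sum_(1 <= k < q.+1) g ^+ k <= 1 - g ^+ q.
Proof.
move=> /andP[g_ge0 g_le]; elim: q => [|q IH]; first by rewrite big_geq // expr0 subrr.
rewrite big_nat_recr //= exprS.
have gq_ge0 : 0 <= g ^+ q by rewrite exprn_ge0.
have : g * g ^+ q <= 1 / 2 * g ^+ q by rewrite ler_wpM2r.
lra.
Qed.

Lemma sum_lam_inv_le (R : realType) (gamma lambda0 : R) q :
  0 < gamma <= 1 / 2 -> 0 < lambda0 ->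
  \sum_(1 <= k < q.+1) (lam gamma lambda0 k)^-1 <= lambda0^-1.
Proof.
move=> /andP[g_gt0 g_le] l0_gt0.
have -> : \sum_(1 <= k < q.+1) (lam gamma lambda0 k)^-1 =
          lambda0^-1 * \sum_(1 <= k < q.+1) gamma ^+ k.
  by rewrite mulr_sumr; apply: eq_bigr => k _; rewrite /lam invfM invrK mulrC.
rewrite -[leRHS]mulr1 ler_pM2l ?invr_gt0 //.
have g_bnd : 0 <= gamma <= 1 / 2 by rewrite ltW.
apply: le_trans (sum_expr_le q g_bnd) _.
by rewrite lerBlDr lerDl exprn_ge0 // ltW.
Qed.

Theorem lemma2p7 (R : realType) (n q : nat) (u : nat -> 'rV[R]_n -> R) (eta : R -> R)
  (Hn : (3 <= n)%N)
  (Hu : forall m, (m <= q)%N -> nonconst_affine (u m))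
  (Hcpt : compact (Omega q u))
  (Hint : interior (Omega q u) !=set0)
  (Hsmooth : smooth_fun eta)
  (Heven : forall t, eta (- t) = eta t)
  (Habs : forall t, 1 / 2 <= `|t| -> eta t = `|t|)
  (Hconv : forall t, 0 <= derive1n 2 eta t) :
  forall (gamma lambda0 : R), 0 < gamma < 1 / 2 -> 1 < lambda0 ->
  (forall x : 'rV[R]_n,
     \big[Num.max/u 0%N x]_(m < q.+1) u m x <= hatu eta gamma lambda0 u q x /\
     hatu eta gamma lambda0 u q x <=
       \big[Num.max/u 0%N x]_(m < q.+1) u m x
       + \sum_(1 <= k < q.+1) (lam gamma lambda0 k)^-1)
  /\ [set x | forall m, (m <= q)%N -> u m x <= - lambda0^-1]
       `<=` [set x | hatu eta gamma lambda0 u q x <= 0]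
  /\ [set x | hatu eta gamma lambda0 u q x <= 0] `<=` Omega q u.
Proof.
move=> gamma lambda0 /andP[g_gt0 g_lt] l0_gt1.
have l0_gt0 : 0 < lambda0 by lra.
have c_le2 : 1 <= 2 :> R by lra.
have hat_bnd x := hatu_bounds u x q (eta_abs_bounds Hsmooth Habs Hconv) c_le2 g_gt0 l0_gt0.
split; [|split].
- by move=> x; apply/andP/hat_bnd.
- move=> x /= u_le; have /andP[_ hat_le] := hat_bnd x.
  have max_le : \big[Num.max/u 0%N x]_(m < q.+1) u m x <= - lambda0^-1.
    by apply: bigmax_le => [|i _]; apply: u_le; rewrite // -ltnS.
  have sum_le : \sum_(1 <= k < q.+1) (lam gamma lambda0 k)^-1 <= lambda0^-1.
    by apply: sum_lam_inv_le => //; rewrite g_gt0 ltW.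
  by apply: le_trans hat_le _; apply: le_trans (lerD max_le sum_le) _; rewrite addNr.
- move=> x /= hat_le m m_le; have /andP[max_le _] := hat_bnd x.
  apply: le_trans _ (le_trans max_le hat_le).
  exact: (le_bigmax (u 0%N x) (fun i : 'I_q.+1 => u i x) (Ordinal (m_le : (m < q.+1)%N))).
Qed.
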